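(* Let $\mathbb{F}\in\{\mathbb{R},\mathbb{C}\}$, let $A\in\mathcal{M}_n(\mathbb{F})$ be Hermitian, and let $\mathbf{v}=(v_1,\dots,v_n)^\top\in\mathbb{F}^n$ be an eigenvector of $A$ whose first entry $v_1$ is real and nonzero. Define $\mathbf{q}_1\coloneqq\mathbf{v}$ and $\mathbf{q}_i\coloneqq \overline{v}_i\,\mathbf{e}_1 - v_1\,\mathbf{e}_i$ for $i=2,\dots,n$, where $\mathbf{e}_1,\dots,\mathbf{e}_n$ is the canonical basis of $\mathbb{F}^n$. Then the matrix $Q=(\mathbf{q}_1\ \mathbf{q}_2\ \cdots\ \mathbf{q}_n)\in\mathcal{M}_n(\mathbb{F})$ whose $i$-th column is $\mathbf{q}_i$ is Hermitian and invertible.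
   Context: $\overline{v}_i$ denotes the complex conjugate of $v_i$. *)

From HB Require Import structures.
From mathcomp Require Import all_boot all_order all_algebra.
From mathcomp Require Import sesquilinear.
From mathcomp Require Import reals.
From mathcomp Require Import complex.
Set Implicit Arguments. Unset Strict Implicit. Unset Printing Implicit Defensive.
Import Order.TTheory GRing.Theory Num.Theory.
Local Open Scope ring_scope.

(* The matrix Q = (q_1 q_2 ... q_n) of the paper, for vectors of F^(n+1),
   indices shifted to start at 0 (so q_1 is column ord0).  [conj] is the
   conjugation of F (identity for F = R, complex conjugation for F = C). *)
Definition Qmx (F : nzRingType) (conj : F -> F) (n : nat) (v : 'cV[F]_n.+1)
  : 'M[F]_n.+1 :=
  \matrix_(i, j)
    if j == ord0 then v i 0
    else (i == ord0)%:R * conj (v j 0) - (i == j)%:R * v ord0 0.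

From mathcomp Require Import all_boot all_order all_algebra.
From mathcomp Require Import sesquilinear reals complex.
Import Order.TTheory GRing.Theory Num.Theory.
Local Open Scope ring_scope.

(* Hermitian: q_1 = v and the first row of Q are conjugate, and the remaining
   block is the real scalar matrix -v_1 I.  Invertible: if u Q = 0 for a row
   vector u, then column j of u Q gives u_1 conj(v_j) = u_j v_1 for every j
   (also for j = 1, as v_1 is real), and column 1 gives sum_j u_j v_j = 0;
   hence u_1 (sum_j conj(v_j) v_j) = v_1 (sum_j u_j v_j) = 0, and since the
   sum of the conj(v_j) v_j is positive, u_1 = 0 and then u = 0. *)

Lemma Qmx_hermitian (F : fieldType) (conj : {rmorphism F -> F}) n
    (v : 'cV[F]_n.+1) :
  involutive conj -> conj (v ord0 0) = v ord0 0 ->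
  Qmx conj v \is hermitianmx _ false (conj : F -> F).
Proof.
move=> conjK conj_v0; apply/is_hermitianmxP; rewrite expr0 scale1r.
apply/matrixP => i j; rewrite !mxE.
have [-> | i0] := eqVneq i ord0; have [-> | j0] := eqVneq j ord0;
  rewrite ?eqxx ?[ord0 == _]eq_sym ?(negbTE i0) ?(negbTE j0)
    ?mul1r ?mul0r ?subr0 ?sub0r ?conjK //.
by rewrite rmorphN rmorphM rmorph_nat conj_v0 eq_sym.
Qed.

Lemma sumr_nat_eq_mul (F : nzSemiRingType) (I : finType) (k : I) (f : I -> F) :
  \sum_i (i == k)%:R * f i = f k.
Proof.
rewrite (bigD1 k) //= eqxx mul1r big1 ?addr0 // => i /negbTE ->.
by rewrite mul0r.
Qed.

Section QmxUnit.

Variables (F : numFieldType) (conj : F -> F) (n : nat) (v : 'cV[F]_n.+1).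

Lemma mulmx_Qmx_col0 (u : 'rV[F]_n.+1) :
  (u *m Qmx conj v) 0 ord0 = \sum_i u 0 i * v i 0.
Proof. by rewrite mxE; apply: eq_bigr => i _; rewrite !mxE eqxx. Qed.

Lemma mulmx_Qmx_col (u : 'rV[F]_n.+1) j : j != ord0 ->
  (u *m Qmx conj v) 0 j = u 0 ord0 * conj (v j 0) - u 0 j * v ord0 0.
Proof.
move=> j0; rewrite mxE.
under eq_bigr => i _ do rewrite mxE (negbTE j0) mulrBr !(mulrCA (u 0 i)).
by rewrite sumrB !sumr_nat_eq_mul.
Qed.

Hypotheses (conj_mul_ge0 : forall x, 0 <= conj x * x)
  (conj_v0 : conj (v ord0 0) = v ord0 0) (v0_neq0 : v ord0 0 != 0).

Lemma sum_conj_mul_gt0 : 0 < \sum_i conj (v i 0) * v i 0.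
Proof.
rewrite (bigD1 ord0) //= ltr_wpDr ?sumr_ge0 // lt_def conj_v0 mulf_neq0 //=.
by rewrite -{1}conj_v0 conj_mul_ge0.
Qed.

Lemma Qmx_unit : Qmx conj v \in unitmx.
Proof.
rewrite unitmxE unitfE; apply/det0P => -[u /eqP u_neq0 /matrixP uQ0].
have col_eq j : u 0 ord0 * conj (v j 0) = u 0 j * v ord0 0.
  have [-> | j0] := eqVneq j ord0; first by rewrite conj_v0.
  by apply/eqP; rewrite -subr_eq0 -mulmx_Qmx_col // uQ0 mxE.
have sum_uv : \sum_i u 0 i * v i 0 = 0 by rewrite -mulmx_Qmx_col0 uQ0 mxE.
have u00 : u 0 ord0 = 0.
  have : u 0 ord0 * \sum_i conj (v i 0) * v i 0
         = v ord0 0 * \sum_i u 0 i * v i 0.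
    rewrite !big_distrr; apply: eq_bigr => i _ /=.
    by rewrite mulrA col_eq mulrAC mulrC mulrA.
  rewrite sum_uv mulr0 => /eqP.
  by rewrite mulf_eq0 (gt_eqF sum_conj_mul_gt0) orbF => /eqP.
apply: u_neq0; apply/rowP => j; rewrite mxE.
by apply: (mulIf v0_neq0); rewrite -col_eq u00 !mul0r.
Qed.

End QmxUnit.

Theorem lemma4p1 (R : realType) :
  (forall (n : nat) (A : 'M[R]_n.+1) (v : 'cV[R]_n.+1),
      A \is symmetricmx ->
      v != 0 -> (exists lambda : R, A *m v = lambda *: v) ->
      v ord0 0 != 0 ->
      Qmx idfun v \is symmetricmx /\ Qmx idfun v \in unitmx) /\
  (forall (n : nat) (A : 'M[R[i]]_n.+1) (v : 'cV[R[i]]_n.+1),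
      A \is hermsymmx ->
      v != 0 -> (exists lambda : R[i], A *m v = lambda *: v) ->
      v ord0 0 \is Num.real -> v ord0 0 != 0 ->
      Qmx Num.conj v \is hermsymmx /\ Qmx Num.conj v \in unitmx).
Proof.
split=> n A v _ _ _.
  move=> v0_neq0; split; first by apply: (@Qmx_hermitian _ idfun).
  by apply: Qmx_unit => // x; apply: sqr_ge0.
move=> v0_real v0_neq0; have conj_v0 := conj_Creal v0_real.
split; first by apply: (@Qmx_hermitian _ Num.conj) => //; apply: conjCK.
by apply: Qmx_unit => // x; rewrite mulrC mul_conjC_ge0.
Qed.
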